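(* Let $S_1$ and $S_2$ be two disjoint sets of cells of an $n\times n$ array, each forming a Hamilton cycle. Then for any positive integers $t$ and $s$ with $s>t+2n$, the cells of $S_1\cup S_2$ can be filled with nonzero integers so that the resulting (partial) array is shiftable, has support $\{s+i,\ t+i\mid 1\le i\le 2n\}$ (each of these $4n$ absolute values occurring exactly once), and the four entries in each row and in each column sum to $0$.
   Context: Cells of an $n\times n$ array are identified with edges of $K_{n,n}$ (cell $(i,j)$ ↔ edge $\{a_i,b_j\}$); a set of cells forms a Hamilton cycle if the corresponding edge set is a single cycle of length $2n$. The support of an array is the set of absolute values of its entries. An array is shiftable if each row and each column contains the same number of positive and negative entries. *)

From HB Require Import structures.
From mathcomp Require Import all_boot all_order all_algebra all_fingroup.
Set Implicit Arguments. Unset Strict Implicit. Unset Printing Implicit Defensive.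
Import GRing.Theory Num.Theory.

(* Cells of an n x n array are pairs (row, column) : 'I_n * 'I_n; cell (i,j)
   corresponds to the edge {a_i, b_j} of K_{n,n}. *)
Notation cell n := ('I_n * 'I_n)%type.

(* S forms a Hamilton cycle: there are orderings sigma of the rows (a-vertices)
   and tau of the columns (b-vertices) such that the cycle is
   a_{sigma 0} b_{tau 0} a_{sigma 1} b_{tau 1} ... a_{sigma (n-1)} b_{tau (n-1)} a_{sigma 0},
   its edges being {a_{sigma k}, b_{tau k}} and {a_{sigma (k+1 mod n)}, b_{tau k}};
   the edge set must have 2n elements (a genuine cycle of length 2n). *)
Definition hamilton_cycle (n : nat) (S : {set cell n}) : Prop :=
  exists (sigma tau : {perm 'I_n}),
    S = [set (sigma k, tau k) | k : 'I_n] :|: [set (sigma (ordS k), tau k) | k : 'I_n]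
    /\ #|S| = (2 * n)%N.

(* A partial array is modelled as A : 'I_n -> 'I_n -> int, empty cells being 0. *)
Definition row_pos n (A : 'I_n -> 'I_n -> int) (i : 'I_n) := #|[set j | (0 < A i j)%R]|.
Definition row_neg n (A : 'I_n -> 'I_n -> int) (i : 'I_n) := #|[set j | (A i j < 0)%R]|.
Definition col_pos n (A : 'I_n -> 'I_n -> int) (j : 'I_n) := #|[set i | (0 < A i j)%R]|.
Definition col_neg n (A : 'I_n -> 'I_n -> int) (j : 'I_n) := #|[set i | (A i j < 0)%R]|.

Definition shiftable n (A : 'I_n -> 'I_n -> int) : Prop :=
  (forall i, row_pos A i = row_neg A i) /\ (forall j, col_pos A j = col_neg A j).

(* Write a Hamilton cycle as a_{sg 0} b_{tu 0} a_{sg 1} b_{tu 1} ... and put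
   +(b + 2k + 1) on its cell (sg k, tu k) and -(b + 2k + 2) on its cell
   (sg (k+1), tu k).  Every row and every column then holds one positive and
   one negative entry, the absolute values are b+1, ..., b+2n, each column sums
   to -1, and each row sums to 1 except row sg 0, which sums to 1 - 2n.
   Traversing the second cycle from the row where the first one starts, the
   filling of S1 with b = s minus the filling of S2 with b = t has all line sums
   0.  The conditions on s and t only make the two ranges of absolute values
   disjoint, which the multiset formulation of the support does not need. *)

From HB Require Import structures.
From mathcomp Require Import all_boot all_order all_algebra all_fingroup.
From mathcomp Require Import zify.
Import Order.TTheory GRing.Theory Num.Theory.
Set Implicit Arguments.
Unset Strict Implicit.
Unset Printing Implicit Defensive.

Lemma perm_cat_map_flatten (T U : eqType) (f g : T -> U) (s : seq T) :
  perm_eq ([seq f x | x <- s] ++ [seq g x | x <- s]) (flatten [seq [:: f x; g x] | x <- s]).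
Proof.
elim: s => //= x s IHs.
by rewrite perm_cons perm_catC /= perm_cons perm_catC.
Qed.

Lemma flatten_pairs_iota b m :
  flatten [seq [:: (b + 2 * k).+1; (b + 2 * k).+2] | k <- iota 0 m] = iota b.+1 (2 * m).
Proof.
elim: m b => // m IHm b.
rewrite (_ : 2 * m.+1 = (2 * m).+2)%N ?mulnS //= -(IHm b.+2) (iotaDl 1 0) -map_comp.
rewrite muln0 addn0; congr [:: _, _ & flatten _].
by apply: eq_map => k /=; rewrite mulnDr muln1 addnA addn2.
Qed.

Lemma card_set_inj_eq (T : finType) (f : T -> T) (x : T) :
  injective f -> #|[set y | f y == x]| = 1.
Proof.
move=> f_inj; rewrite -(cards1 x) -[RHS](card_preimset _ f_inj).
by apply: eq_card => y; rewrite !inE.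
Qed.

Lemma card_set_perm (T : finType) (p : {perm T}) (P : pred T) :
  #|[set x | P (p x)]| = #|[set x | P x]|.
Proof.
rewrite -(card_preimset [set x | P x] (@perm_inj _ p)).
by apply: eq_card => x; rewrite !inE.
Qed.

Lemma perm_enum_setU (T : finType) (A B : {set T}) :
  [disjoint A & B] -> perm_eq (enum (A :|: B)) (enum A ++ enum B).
Proof.
move=> AB; apply: uniq_perm; first exact: enum_uniq.
  rewrite cat_uniq !enum_uniq andbT /=; apply/hasPn => x; rewrite !mem_enum => xB.
  by rewrite (disjointFl AB xB).
by move=> x; rewrite mem_cat !mem_enum in_setU.
Qed.

Lemma ordS_neq n (k : 'I_n) : (1 < n)%N -> ordS k != k.
Proof.
move=> n_gt1; apply/eqP => /(congr1 val) /=.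
have := ltn_ord k; case: (ltnP k.+1 n) => [k_lt|k_ge] k_ltn.
  by rewrite modn_small //; lia.
have -> : k.+1 = n by lia.
by rewrite modnn; lia.
Qed.

Lemma ord_pred_neq n (k : 'I_n) : (1 < n)%N -> ord_pred k != k.
Proof. by move=> n_gt1; rewrite -(inj_eq (@ordS_inj n)) ord_predK eq_sym ordS_neq. Qed.

Local Open Scope ring_scope.

Lemma addr_ordS n (k0 k : 'I_n.+1) : k0 + ordS k = ordS (k0 + k).
Proof. by apply: val_inj; rewrite /= modnDmr -[X in _ = X %[mod _]]addn1 modnDml addn1 addnS. Qed.

Lemma sumr_ifeq2 (T : finType) (V : nmodType) (a c : T) (F G : T -> V) : a != c ->
  \sum_(j : T) (if j == a then F j else if j == c then G j else 0) = F a + G c.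
Proof.
move=> ac; rewrite (bigD1 a) //= eqxx (bigD1 c) /=; last by rewrite eq_sym.
rewrite eq_sym (negbTE ac) eqxx big1 ?addr0 // => j /andP [ja jc].
by rewrite (negbTE ja) (negbTE jc).
Qed.

Lemma card_set_addf_disjoint (T : finType) (P : pred int) (f g : T -> int) :
  ~~ P 0 -> (forall x, (f x == 0) || (g x == 0)) ->
  #|[set x | P (f x + g x)]| = (#|[set x | P (f x)]| + #|[set x | P (g x)]|)%N.
Proof.
move=> P0 fg0; rewrite -cardsUI.
have -> : [set x | P (f x)] :&: [set x | P (g x)] = set0.
  apply/setP => x; rewrite !inE.
  by case/orP: (fg0 x) => /eqP ->; rewrite (negbTE P0) ?andbF.
rewrite cards0 addn0; apply: eq_card => x; rewrite !inE.
by case/orP: (fg0 x) => /eqP ->; rewrite ?addr0 ?add0r (negbTE P0) ?orbF.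
Qed.

Section Shiftable.
Variable n : nat.
Implicit Types A B : 'I_n -> 'I_n -> int.

Lemma shiftable_opp A : shiftable A -> shiftable (fun i j => - A i j).
Proof.
move=> [rowA colA]; split => [i|j]; rewrite /row_pos /row_neg /col_pos /col_neg.
- under eq_finset do rewrite oppr_gt0; under [in RHS]eq_finset do rewrite oppr_lt0.
  exact/esym/rowA.
- under eq_finset do rewrite oppr_gt0; under [in RHS]eq_finset do rewrite oppr_lt0.
  exact/esym/colA.
Qed.

Lemma shiftable_add A B : (forall i j, (A i j == 0) || (B i j == 0)) ->
  shiftable A -> shiftable B -> shiftable (fun i j => A i j + B i j).
Proof.
move=> AB0 [rowA colA] [rowB colB].
have pos := card_set_addf_disjoint (P := fun x : int => 0 < x) (negbT (ltxx 0)).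
have neg := card_set_addf_disjoint (P := fun x : int => x < 0) (negbT (ltxx 0)).
split=> [i|j]; rewrite /row_pos /row_neg /col_pos /col_neg [LHS]pos ?[RHS]neg;
  try by move=> x; apply: AB0.
- exact: f_equal2 (rowA i) (rowB i).
- exact: f_equal2 (colA j) (colB j).
Qed.

End Shiftable.

Section HamiltonCells.
Variable n : nat.
Implicit Types (sg tu r : {perm 'I_n}) (A : 'I_n -> 'I_n -> int).

Definition ham_cells sg tu : {set cell n} :=
  [set (sg k, tu k) | k : 'I_n] :|: [set (sg (ordS k), tu k) | k : 'I_n].

Lemma mem_ham_cells sg tu i j : ((i, j) \in ham_cells sg tu) =
  ((sg^-1)%g i == (tu^-1)%g j) || ((sg^-1)%g i == ordS ((tu^-1)%g j)).
Proof.
rewrite inE; congr orb; apply/imsetP/eqP => [[k _ [-> ->]]|ij]; rewrite ?permK //.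
all: by exists ((tu^-1)%g j); rewrite ?inE // -[i](permKV sg) ij !permKV.
Qed.

Lemma ham_cells_rotate r sg tu : {morph r : k / ordS k} ->
  ham_cells (r * sg)%g (r * tu)%g = ham_cells sg tu.
Proof.
move=> rS; rewrite /ham_cells; congr (_ :|: _); apply/setP => c;
  apply/imsetP/imsetP => [[k _ ->]|[k _ ->]].
- by exists (r k); rewrite ?inE // !permM.
- by exists ((r^-1)%g k); rewrite ?inE // !permM permKV.
- by exists (r k); rewrite ?inE // !permM rS.
- by exists ((r^-1)%g k); rewrite ?inE // !permM rS permKV.
Qed.

Lemma enum_ham_cells sg tu : (1 < n)%N ->
  perm_eq (enum (ham_cells sg tu))
    ([seq (sg k, tu k) | k <- enum 'I_n] ++ [seq (sg (ordS k), tu k) | k <- enum 'I_n]).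
Proof.
move=> n_gt1; apply: uniq_perm; first exact: enum_uniq.
  have inj_diag : injective (fun k => (sg k, tu k)) by move=> a c [_ /perm_inj].
  have inj_sub : injective (fun k => (sg (ordS k), tu k)) by move=> a c [_ /perm_inj].
  rewrite cat_uniq (map_inj_uniq inj_diag) (map_inj_uniq inj_sub) enum_uniq andbT /=.
  apply/hasPn => c /mapP [k _ ->]; apply/mapP => [[k' _ [/perm_inj kk' /perm_inj k'k]]].
  by move: kk'; rewrite -k'k; apply/eqP; rewrite ordS_neq.
move=> c; rewrite mem_enum mem_cat inE.
by congr orb; apply/imsetP/mapP => [[k _ ck]|[k _ ck]]; exists k; rewrite ?mem_enum.
Qed.

Definition relabel sg tu A i j := A ((sg^-1)%g i) ((tu^-1)%g j).

Lemma shiftable_relabel sg tu A : shiftable A -> shiftable (relabel sg tu A).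
Proof.
move=> [rowA colA]; split=> [i|j]; rewrite /row_pos /row_neg /col_pos /col_neg /relabel.
- rewrite (card_set_perm (tu^-1)%g (fun m => 0 < A (sg^-1 i)%g m)).
  by rewrite (card_set_perm (tu^-1)%g (fun m => A (sg^-1 i)%g m < 0)); apply: rowA.
- rewrite (card_set_perm (sg^-1)%g (fun k => 0 < A k (tu^-1 j)%g)).
  by rewrite (card_set_perm (sg^-1)%g (fun k => A k (tu^-1 j)%g < 0)); apply: colA.
Qed.

Lemma sum_relabel_row sg tu A i :
  \sum_j relabel sg tu A i j = \sum_m A ((sg^-1)%g i) m.
Proof. by rewrite (reindex_inj (@perm_inj _ tu)); apply: eq_bigr => m _; rewrite /relabel permK. Qed.

Lemma sum_relabel_col sg tu A j :
  \sum_i relabel sg tu A i j = \sum_k A k ((tu^-1)%g j).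
Proof. by rewrite (reindex_inj (@perm_inj _ sg)); apply: eq_bigr => k _; rewrite /relabel permK. Qed.

End HamiltonCells.

Section CycleFill.
Variable n : nat.
Implicit Types (b : nat) (k m : 'I_n.+2).

Definition cycle_fill b k m : int :=
  if k == m then Posz (b + 2 * m)%N.+1
  else if k == ordS m then - Posz (b + 2 * m)%N.+2 else 0.

Lemma cycle_fill_diag b m : cycle_fill b m m = Posz (b + 2 * m)%N.+1.
Proof. by rewrite /cycle_fill eqxx. Qed.

Lemma cycle_fill_subdiag b m : cycle_fill b (ordS m) m = - Posz (b + 2 * m)%N.+2.
Proof. by rewrite /cycle_fill (negbTE (ordS_neq m isT)) eqxx. Qed.

Lemma cycle_fill_neq0 b k m : (cycle_fill b k m != 0) = (k == m) || (k == ordS m).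
Proof.
rewrite /cycle_fill; case: ifP => // _; case: ifP => _; last by rewrite eqxx.
by rewrite oppr_eq0.
Qed.

Lemma shiftable_cycle_fill b : shiftable (cycle_fill b).
Proof.
have pos k m : (0 < cycle_fill b k m) = (m == k).
  by rewrite /cycle_fill eq_sym; case: ifP => // _; case: ifP.
have neg k m : (cycle_fill b k m < 0) = (ordS m == k).
  rewrite /cycle_fill (eq_sym k) (eq_sym k); case: (eqVneq m k) => [<-|_].
    by rewrite (negbTE (ordS_neq m isT)).
  by case: ifP.
split=> [k|m]; rewrite /row_pos /row_neg /col_pos /col_neg.
- by under eq_finset do rewrite pos; under [in RHS]eq_finset do rewrite neg;
    rewrite !card_set_inj_eq //; apply: ordS_inj.
- under eq_finset => k do rewrite pos eq_sym; under [in RHS]eq_finset => k do rewrite neg eq_sym.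
  by rewrite !(card_set_inj_eq _ (@inj_id _)).
Qed.

Lemma sum_cycle_fill_row b k :
  \sum_m cycle_fill b k m = if k == ord0 then 1 - Posz (2 * n.+2) else 1.
Proof.
under eq_bigr => m _ do rewrite /cycle_fill (eq_sym k) (eq_sym k) (can2_eq (@ordSK _) (@ord_predK _)).
rewrite sumr_ifeq2; last by rewrite eq_sym ord_pred_neq.
case: k => [[|k] lt_k] /=; first by rewrite modn_small //; lia.
by rewrite modnDr modn_small; lia.
Qed.

Lemma sum_cycle_fill_col b m : \sum_k cycle_fill b k m = -1.
Proof. by rewrite sumr_ifeq2 ?(eq_sym m) ?ordS_neq //; lia. Qed.

End CycleFill.

Section HamFill.
Variable n : nat.
Implicit Types (sg tu : {perm 'I_n.+2}) (b : nat).

Definition ham_fill sg tu b := relabel sg tu (cycle_fill b).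

Lemma ham_fill_neq0 sg tu b i j : (ham_fill sg tu b i j != 0) = ((i, j) \in ham_cells sg tu).
Proof. by rewrite mem_ham_cells /ham_fill /relabel cycle_fill_neq0. Qed.

Lemma shiftable_ham_fill sg tu b : shiftable (ham_fill sg tu b).
Proof. exact/shiftable_relabel/shiftable_cycle_fill. Qed.

Lemma sum_ham_fill_row sg tu b i :
  \sum_j ham_fill sg tu b i j = if i == sg ord0 then 1 - Posz (2 * n.+2) else 1.
Proof. by rewrite sum_relabel_row sum_cycle_fill_row (can2_eq (permKV sg) (permK sg)). Qed.

Lemma sum_ham_fill_col sg tu b j : \sum_i ham_fill sg tu b i j = -1.
Proof. by rewrite sum_relabel_col sum_cycle_fill_col. Qed.

Lemma abs_ham_fill sg tu b :
  perm_eq [seq absz (ham_fill sg tu b c.1 c.2) | c <- enum (ham_cells sg tu)]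
          (iota b.+1 (2 * n.+2)).
Proof.
have diag k : absz (ham_fill sg tu b (sg k) (tu k)) = (b + 2 * k)%N.+1.
  by rewrite /ham_fill /relabel !permK cycle_fill_diag.
have subdiag k : absz (ham_fill sg tu b (sg (ordS k)) (tu k)) = (b + 2 * k)%N.+2.
  by rewrite /ham_fill /relabel !permK cycle_fill_subdiag abszN.
apply: perm_trans (perm_map _ (enum_ham_cells sg tu isT)) _.
rewrite map_cat -!(map_comp (fun c => absz (ham_fill sg tu b c.1 c.2))).
rewrite (eq_map diag) (eq_map subdiag).
apply: perm_trans (perm_cat_map_flatten _ _ _) _.
by rewrite -flatten_pairs_iota -val_enum_ord -map_comp.
Qed.

End HamFill.

Section HamFillPair.
Variables (n : nat) (sg1 tu1 sg2 tu2 : {perm 'I_n.+2}) (s t : nat).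
Hypothesis cells_disjoint : [disjoint ham_cells sg1 tu1 & ham_cells sg2 tu2].
Hypothesis same_start : sg1 ord0 = sg2 ord0.

Definition pair_fill i j := ham_fill sg1 tu1 s i j - ham_fill sg2 tu2 t i j.

Let fill2_eq0 i j : (i, j) \in ham_cells sg1 tu1 -> ham_fill sg2 tu2 t i j = 0.
Proof.
by move=> ij1; apply/eqP; rewrite -[_ == 0]negbK ham_fill_neq0 (disjointFr cells_disjoint ij1).
Qed.

Let fill1_eq0 i j : (i, j) \in ham_cells sg2 tu2 -> ham_fill sg1 tu1 s i j = 0.
Proof.
by move=> ij2; apply/eqP; rewrite -[_ == 0]negbK ham_fill_neq0 (disjointFl cells_disjoint ij2).
Qed.

Lemma pair_fill_neq0 i j :
  ((i, j) \in ham_cells sg1 tu1 :|: ham_cells sg2 tu2) = (pair_fill i j != 0).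
Proof.
rewrite in_setU /pair_fill; case: (boolP ((i, j) \in ham_cells sg1 tu1)) => [ij1|ij1] /=.
  by rewrite fill2_eq0 // subr0 ham_fill_neq0.
case: (boolP ((i, j) \in ham_cells sg2 tu2)) => [ij2|ij2].
  by rewrite fill1_eq0 // sub0r oppr_eq0 ham_fill_neq0.
by move: ij1 ij2; rewrite -(ham_fill_neq0 _ _ s) -(ham_fill_neq0 _ _ t) !negbK => /eqP-> /eqP->;
  rewrite subr0 eqxx.
Qed.

Lemma shiftable_pair_fill : shiftable pair_fill.
Proof.
apply: shiftable_add; last exact/shiftable_opp/shiftable_ham_fill.
- move=> i j; rewrite oppr_eq0 -[_ == 0]negbK -[X in _ || X]negbK -negb_and.
  rewrite !ham_fill_neq0; apply/negP => /andP [ij1 ij2].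
  by rewrite (disjointFr cells_disjoint ij1) in ij2.
- exact: shiftable_ham_fill.
Qed.

Lemma abs_pair_fill :
  perm_eq [seq absz (pair_fill c.1 c.2) | c <- enum (ham_cells sg1 tu1 :|: ham_cells sg2 tu2)]
          (iota s.+1 (2 * n.+2) ++ iota t.+1 (2 * n.+2)).
Proof.
apply: perm_trans (perm_map _ (perm_enum_setU cells_disjoint)) _.
rewrite map_cat; apply: perm_cat.
- rewrite (eq_in_map _ (fun c => absz (ham_fill sg1 tu1 s c.1 c.2)) _).1 ?abs_ham_fill //.
  by move=> [i j]; rewrite mem_enum /pair_fill /= => ij1; rewrite fill2_eq0 ?subr0.
- rewrite (eq_in_map _ (fun c => absz (ham_fill sg2 tu2 t c.1 c.2)) _).1 ?abs_ham_fill //.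
  by move=> [i j]; rewrite mem_enum /pair_fill /= => ij2; rewrite fill1_eq0 ?sub0r ?abszN.
Qed.

Lemma sum_pair_fill_row i : \sum_j pair_fill i j = 0.
Proof. by rewrite sumrB !sum_ham_fill_row same_start subrr. Qed.

Lemma sum_pair_fill_col j : \sum_i pair_fill i j = 0.
Proof. by rewrite sumrB !sum_ham_fill_col subrr. Qed.

End HamFillPair.

Unset Implicit Arguments.

Theorem lemma2p3 (n : nat) (S1 S2 : {set cell n}) :
  hamilton_cycle S1 -> hamilton_cycle S2 -> [disjoint S1 & S2] ->
  forall t s : nat, (0 < t)%N -> (0 < s)%N -> (t + 2 * n < s)%N ->
  exists A : 'I_n -> 'I_n -> int,
    (* filled cells are exactly those of S1 ∪ S2, with nonzero entries *)
    (forall i j, ((i, j) \in S1 :|: S2) = (A i j != 0%R)) /\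
    shiftable A /\
    (* support {s+i, t+i | 1 <= i <= 2n}, each absolute value occurring exactly once *)
    perm_eq [seq absz (A c.1 c.2) | c <- enum (S1 :|: S2)]
            ([seq (s + i)%N | i <- iota 1 (2 * n)] ++ [seq (t + i)%N | i <- iota 1 (2 * n)]) /\
    (forall i : 'I_n, (\sum_(j < n) A i j)%R = 0%R) /\
    (forall j : 'I_n, (\sum_(i < n) A i j)%R = 0%R).
Proof.
move=> ham1 ham2 disj t s _ _ _.
case: n S1 S2 ham1 ham2 disj => [|[|n]] S1 S2 [sg1 [tu1 [S1E card_S1]]] [sg2 [tu2 [S2E _]]] disj.
- exists (fun _ _ => 0); do ![split; try by case].
  by case: (enum _) => [|[[]]].
- by have := max_card S1; rewrite card_S1 card_prod card_ord.
rewrite {}S1E {}S2E -/(ham_cells sg1 tu1) -/(ham_cells sg2 tu2) in disj *.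
pose r := perm (addrI ((sg2^-1)%g (sg1 ord0))).
have rotate : ham_cells (r * sg2)%g (r * tu2)%g = ham_cells sg2 tu2.
  by apply: ham_cells_rotate => k; rewrite /r !permE addr_ordS.
rewrite -rotate in disj *.
have same_start : sg1 ord0 = (r * sg2)%g ord0 by rewrite permM /r permE addr0 permKV.
exists (pair_fill sg1 tu1 (r * sg2)%g (r * tu2)%g s t); rewrite -!iotaDl !addn1.
split; first exact: pair_fill_neq0.
split; first exact: shiftable_pair_fill.
split; first exact: abs_pair_fill.
by split=> [i|j]; [apply: sum_pair_fill_row | apply: sum_pair_fill_col].
Qed.
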